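(* Assume $n_1,n_2\in(0,4)$ and (IE). Then for all $\varepsilon\in(0,1)$ and all $t\in(0,T_{max,\varepsilon})$, $$\frac{d}{dt}\int_\Omega u_\varepsilon\le\Big(\lambda_1+\frac{\sqrt\varepsilon}{2\sqrt3}\Big)\int_\Omega u_\varepsilon-\int_\Omega u_\varepsilon^2+a_1\int_\Omega u_\varepsilon v_\varepsilon$$ and $$\frac{d}{dt}\int_\Omega v_\varepsilon\le\Big(\lambda_2+\frac{\sqrt\varepsilon}{2\sqrt3}\Big)\int_\Omega v_\varepsilon-\int_\Omega v_\varepsilon^2-a_2\int_\Omega u_\varepsilon v_\varepsilon+\frac{a_2\sqrt\varepsilon}{2\sqrt3}\int_\Omega u_\varepsilon.$$
   Context: Let $\Omega\subset\mathbb{R}$ be a bounded open interval, $D_i,a_i,\lambda_i,\chi_i>0$ ($i=1,2$), and fix $\alpha\in(0,\frac12]$. Assumption (IE): $u_0,v_0\in W^{1,2}(\Omega)$ with $u_0>0,v_0>0$ in $\overline\Omega$; for each $\varepsilon\in(0,1)$, $u_{0\varepsilon},v_{0\varepsilon}\in C^5(\overline\Omega)$ with $u_{0\varepsilon x}=u_{0\varepsilon xxx}=v_{0\varepsilon x}=v_{0\varepsilon xxx}=0$ on $\partial\Omega$; $\frac12\inf_\Omega u_0\le u_{0\varepsilon}\le u_0+1$, $\frac12\inf_\Omega v_0\le v_{0\varepsilon}\le v_0+1$ in $\Omega$; $\int_\Omega u_{0\varepsilon x}^2\le\int_\Omega u_{0x}^2+1$, $\int_\Omega v_{0\varepsilon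 x}^2\le\int_\Omega v_{0x}^2+1$; $u_{0\varepsilon}\to u_0$, $v_{0\varepsilon}\to v_0$ a.e. as $\varepsilon\searrow0$. Approximating problem: $u_t=-\varepsilon\big(\frac{u^4}{u^{4-n_1}+\varepsilon}u_{xxx}\big)_x+\varepsilon^{\alpha/2}(u^{-\alpha}u_x)_x+D_1u_{xx}-\chi_1\big(\frac{u^{5-n_1}}{u^{4-n_1}+\varepsilon}v_x\big)_x+\frac{3u^3}{3u^2+\varepsilon}(\lambda_1-u+a_1v)$, $v_t=-\varepsilon\big(\frac{v^4}{v^{4-n_2}+\varepsilon}v_{xxx}\big)_x+\varepsilon^{\alpha/2}(v^{-\alpha}v_x)_x+D_2v_{xx}+\chi_2\big(\frac{v^{5-n_2}}{v^{4-n_2}+\varepsilon}u_x\big)_x+\frac{3v^3}{3v^2+\varepsilon}(\lambda_2-v-a_2u)$ in $\Omega\times(0,\infty)$, $u_x=v_x=u_{xxx}=v_{xxx}=0$ on $\partial\Omega$, $u(\cdot,0)=u_{0\varepsilon}$, $v(\cdot,0)=v_{0\varepsilon}$. For $n_i\in(0,4)$ and each $\varepsilon$ it has a classical solution $(u_\varepsilon,v_\varepsilon)$, positive in $\overline\Omega\times[0,T_{max,\varepsilon})$, belonging to $\bigcap_{s\in(3/2,2)}C^0([0,T_{max,\varepsilon});W^{s,2}(\Omega))\cap C^{4,1}(\overline\Omega\times(0,T_{max,\varepsilon}))$, where $T_{max,\varepsilon}\in(0,\infty]$ is maximal: either $T_{max,\varepsilon}=\infty$ or $\limsup_{t\nearrow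 T_{max,\varepsilon}}\{\|u_\varepsilon(\cdot,t)\|_{W^{2,2}}+\|1/u_\varepsilon(\cdot,t)\|_{L^\infty}+\|v_\varepsilon(\cdot,t)\|_{W^{2,2}}+\|1/v_\varepsilon(\cdot,t)\|_{L^\infty}\}=\infty$. *)

From Stdlib Require Import Reals.
From Coquelicot Require Import Coquelicot.
Open Scope R_scope.

(* Omega = (a,b); the cylinder  closure(Omega) x (0,T), T in (0, +oo]. *)
Definition cyl (a b : R) (T : Rbar) (x t : R) : Prop :=
  a <= x <= b /\ 0 < t /\ Rbar_lt (Finite t) T.

Definition cont_on_cyl (a b : R) (T : Rbar) (f : R -> R -> R) : Prop :=
  forall x t, cyl a b T x t ->
    filterlim (fun p : R * R => f (fst p) (snd p))
      (within (fun p : R * R => cyl a b T (fst p) (snd p)) (locally (x, t)))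
      (locally (f x t)).

(* u belongs to C^{4,1}(closure(Omega) x (0,T)), with u1..u4 = d^k u / dx^k and
   ut = du/dt : the derivatives exist in Omega x (0,T) and, together with u,
   extend continuously to closure(Omega) x (0,T). *)
Definition C41 (a b : R) (T : Rbar) (u u1 u2 u3 u4 ut : R -> R -> R) : Prop :=
  (forall x t, a < x < b -> 0 < t -> Rbar_lt (Finite t) T ->
      is_derive (fun y => u y t) x (u1 x t) /\
      is_derive (fun y => u1 y t) x (u2 x t) /\
      is_derive (fun y => u2 y t) x (u3 x t) /\
      is_derive (fun y => u3 y t) x (u4 x t) /\
      is_derive (fun s => u x s) t (ut x t)) /\
  cont_on_cyl a b T u /\ cont_on_cyl a b T u1 /\ cont_on_cyl a b T u2 /\
  cont_on_cyl a b T u3 /\ cont_on_cyl a b T u4 /\ cont_on_cyl a b T ut.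

(* Right-hand side of the approximate equation for the component w, coupled with
   the other component z (zx = z_x), at the point (x,t):
   -eps (w^4/(w^(4-n)+eps) w_xxx)_x + eps^(alpha/2) (w^(-alpha) w_x)_x + D w_xx
   + sgn*chi (w^(5-n)/(w^(4-n)+eps) z_x)_x + 3w^3/(3w^2+eps) * kin(w,z). *)
Definition rhs (eps alpha n D chi sgn : R) (w w1 w2 w3 zx : R -> R -> R)
    (kin : R -> R) (x t : R) : R :=
  - eps * Derive (fun y => w y t ^ 4 / (Rpower (w y t) (4 - n) + eps) * w3 y t) x
  + Rpower eps (alpha / 2) * Derive (fun y => Rpower (w y t) (- alpha) * w1 y t) x
  + D * w2 x t
  + sgn * chi * Derive (fun y => Rpower (w y t) (5 - n) / (Rpower (w y t) (4 - n) + eps) * zx y t) x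
  + 3 * w x t ^ 3 / (3 * w x t ^ 2 + eps) * kin x.

From Stdlib Require Import Reals Lra Psatz.
From Coquelicot Require Import Coquelicot.
Open Scope R_scope.

(* Integrating the equation for u over (a, b), every term except the reaction
   term 3u^3/(3u^2+eps) (l1 - u + a1 v) is the x-derivative of a flux that
   carries a factor u_x, u_xxx or v_x and therefore vanishes at a and b.  So,
   after differentiating under the integral sign, d/dt int u is the integral of
   the reaction term.  Since 3u^2 + eps >= 2 sqrt (3 eps) u, the factor
   3u^3/(3u^2+eps) lies between u - sqrt eps / (2 sqrt 3) and u, which bounds
   the reaction term pointwise by the integrand of the claimed estimate; the
   same argument applies to v. *)

Lemma continuous_Rplus (f g : R -> R) x :
  continuous f x -> continuous g x -> continuous (fun y => f y + g y) x.
Proof. exact (continuous_plus f g x). Qed.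

Lemma continuous_Rminus (f g : R -> R) x :
  continuous f x -> continuous g x -> continuous (fun y => f y - g y) x.
Proof. exact (continuous_minus f g x). Qed.

Lemma continuous_Rmult (f g : R -> R) x :
  continuous f x -> continuous g x -> continuous (fun y => f y * g y) x.
Proof. exact (continuous_mult f g x). Qed.

Lemma continuous_Rdiv (f g : R -> R) x :
  continuous f x -> continuous g x -> g x <> 0 -> continuous (fun y => f y / g y) x.
Proof.
  intros Hf Hg Hg0. apply continuous_Rmult; [exact Hf|].
  now apply continuous_Rinv_comp.
Qed.

Lemma continuous_Rpow (f : R -> R) n x :
  continuous f x -> continuous (fun y => f y ^ n) x.
Proof.
  intros Hf. induction n as [|n IH]; simpl.
  - apply continuous_const.
  - now apply continuous_Rmult.
Qed.

Lemma continuous_Rpower (f : R -> R) p x :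
  continuous f x -> 0 < f x -> continuous (fun y => Rpower (f y) p) x.
Proof.
  intros Hf Hpos. unfold Rpower. apply continuous_exp_comp.
  apply continuous_Rmult; [apply continuous_const|].
  apply (continuous_comp f ln); [exact Hf|]. now apply continuous_ln.
Qed.

Ltac continuous_R :=
  repeat match goal with
  | |- continuous (fun _ => ?c) _ => apply continuous_const
  | |- continuous (fun y => _ + _) _ => apply continuous_Rplus
  | |- continuous (fun y => _ - _) _ => apply continuous_Rminus
  | |- continuous (fun y => _ / _) _ => apply continuous_Rdiv
  | |- continuous (fun y => _ * _) _ => apply continuous_Rmult
  | |- continuous (fun y => _ ^ _) _ => apply continuous_Rpow
  | |- continuous (fun y => Rpower _ _) _ => apply continuous_Rpower
  end.

Lemma Rpower_pos x p : 0 < Rpower x p.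
Proof. apply exp_pos. Qed.

Lemma ex_derive_Rpower (f : R -> R) p x :
  ex_derive f x -> 0 < f x -> ex_derive (fun y => Rpower (f y) p) x.
Proof.
  intros Hf Hpos. apply (ex_derive_comp (fun z => Rpower z p) f); [|exact Hf].
  exists (p * Rpower (f x) (p - 1)). apply is_derive_Reals.
  now apply derivable_pt_lim_power.
Qed.

(* Coquelicot's [continuous] is two-sided, so continuity of a function on
   [a, b] up to the boundary is expressed as continuity of [f (clamp a b y)]
   on all of R. *)
Definition clamp (a b x : R) : R := Rmax a (Rmin b x).

Section Clamp.

Variables a b : R.
Hypothesis Hab : a <= b.

Lemma clamp_in x : a <= clamp a b x <= b.
Proof. unfold clamp, Rmax, Rmin; repeat destruct Rle_dec; lra. Qed.

Lemma clamp_id x : a <= x <= b -> clamp a b x = x.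
Proof. unfold clamp, Rmax, Rmin; repeat destruct Rle_dec; lra. Qed.

Lemma clamp_lipschitz x y : Rabs (clamp a b y - clamp a b x) <= Rabs (y - x).
Proof.
  unfold clamp, Rmax, Rmin, Rabs; repeat destruct Rle_dec; repeat destruct Rcase_abs; lra.
Qed.

Lemma continuous_clamp x : continuous (clamp a b) x.
Proof.
  intros P [e HP]. exists e. intros y Hy. apply HP.
  exact (Rle_lt_trans _ _ _ (clamp_lipschitz x y) Hy).
Qed.

Lemma ex_RInt_clamp (f : R -> R) :
  (forall x, continuous (fun y => f (clamp a b y)) x) -> ex_RInt f a b.
Proof.
  intros Hf. apply ex_RInt_ext with (fun y => f (clamp a b y)).
  - rewrite Rmin_left, Rmax_right by exact Hab. intros x Hx. now rewrite clamp_id by lra.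
  - apply (ex_RInt_continuous (V := R_CompleteNormedModule)). intros; apply Hf.
Qed.

Lemma is_RInt_continuous_clamp (f : R -> R) :
  (forall x, continuous (fun y => f (clamp a b y)) x) -> is_RInt f a b (RInt f a b).
Proof. intros Hf. apply (RInt_correct (V := R_CompleteNormedModule)), ex_RInt_clamp, Hf. Qed.

End Clamp.

Section Cylinder.

Variables (a b : R) (T : Rbar).
Hypothesis Hab : a < b.

Lemma locally_time_window t :
  0 < t -> Rbar_lt t T -> locally t (fun s => 0 < s /\ Rbar_lt s T).
Proof. intros Ht HtT. now apply (locally_interval _ t 0 T). Qed.

Lemma between_time_window t s r : 0 < t -> Rbar_lt t T -> 0 < s -> Rbar_lt s T ->
  Rmin t s <= r <= Rmax t s -> 0 < r /\ Rbar_lt r T.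
Proof.
  intros. destruct T as [T'| |]; simpl in *; unfold Rmin, Rmax in *;
    destruct Rle_dec; try lra; tauto.
Qed.

Lemma continuous_cyl_comp {U : UniformSpace} (f : R -> R -> R) (phi psi : U -> R) p :
  cont_on_cyl a b T f -> continuous phi p -> continuous psi p ->
  locally p (fun q => cyl a b T (phi q) (psi q)) ->
  continuous (fun q => f (phi q) (psi q)) p.
Proof.
  intros Hf Hphi Hpsi Hcyl.
  apply (filterlim_comp _ _ _ (fun q => (phi q, psi q)) (fun z : R * R => f (fst z) (snd z))
    _ (within (fun z : R * R => cyl a b T (fst z) (snd z)) (locally (phi p, psi p))));
    [|exact (Hf _ _ (locally_singleton _ _ Hcyl))].
  intros P [e HP].
  assert (Bphi := Hphi _ (locally_ball (phi p) e)).
  assert (Bpsi := Hpsi _ (locally_ball (psi p) e)).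
  unfold filtermap in *.
  generalize (filter_and _ _ (filter_and _ _ Bphi Bpsi) Hcyl).
  apply filter_imp. intros q [[H1 H2] Hq]. now apply HP.
Qed.

Lemma continuous_cyl_space f t x : cont_on_cyl a b T f -> 0 < t -> Rbar_lt t T ->
  continuous (fun y => f (clamp a b y) t) x.
Proof.
  intros Hf Ht HtT.
  apply (continuous_cyl_comp f (clamp a b) (fun _ => t) x Hf).
  - apply continuous_clamp; lra.
  - apply continuous_const.
  - apply filter_forall. intros y. split; [apply clamp_in; lra | auto].
Qed.

Lemma continuous_cyl_time f x s : cont_on_cyl a b T f -> a <= x <= b ->
  0 < s -> Rbar_lt s T -> continuous (fun r => f x r) s.
Proof.
  intros Hf Hx Hs HsT.
  apply (continuous_cyl_comp f (fun _ => x) (fun r => r) s Hf).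
  - apply continuous_const.
  - apply continuous_id.
  - generalize (locally_time_window s Hs HsT). apply filter_imp. now split.
Qed.

Lemma continuity_2d_cyl f x t : cont_on_cyl a b T f -> 0 < t -> Rbar_lt t T ->
  continuity_2d_pt (fun s y => f (clamp a b y) s) t x.
Proof.
  intros Hf Ht HtT. apply continuity_2d_pt_filterlim.
  apply (continuous_cyl_comp f (fun z : R * R => clamp a b (snd z)) fst (t, x) Hf).
  - apply (continuous_comp snd (clamp a b)); [apply continuous_snd|].
    apply continuous_clamp; lra.
  - apply continuous_fst.
  - destruct (locally_time_window t Ht HtT) as [d Hd]. exists d. intros [s y] [Hs _].
    split; [apply clamp_in; lra | now apply Hd].
Qed.

Lemma is_derive_time_primitive (f : R -> R -> R) c t s :
  cont_on_cyl a b T f -> a <= c <= b -> 0 < t -> Rbar_lt t T -> 0 < s -> Rbar_lt s T ->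
  is_derive (fun r => RInt (fun z => f c z) t r) s (f c s).
Proof.
  intros Hf Hc Ht HtT Hs HsT. apply is_derive_RInt with t.
  - generalize (locally_time_window s Hs HsT). apply filter_imp. intros r [Hr HrT].
    apply RInt_correct, (ex_RInt_continuous (V := R_CompleteNormedModule)). intros z Hz.
    destruct (between_time_window t r z Ht HtT Hr HrT Hz).
    now apply continuous_cyl_time.
  - now apply continuous_cyl_time.
Qed.

Section TimeDerivative.

Variables (w wt : R -> R -> R) (t : R).
Hypothesis Hwt : forall x s, a < x < b -> 0 < s -> Rbar_lt s T ->
  is_derive (fun r => w x r) s (wt x s).
Hypotheses (Cw : cont_on_cyl a b T w) (Cwt : cont_on_cyl a b T wt).
Hypotheses (Ht : 0 < t) (HtT : Rbar_lt t T).

(* The time derivative of [w] is not assumed to exist on the boundary; there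
   [w] is replaced by a primitive in time of [wt], which changes no integral
   over [a, b] and makes the integrand differentiable in time on all of [a, b]. *)
Definition time_extension (s x : R) : R :=
  match Rlt_dec a x, Rlt_dec x b with
  | left _, left _ => w x s
  | _, _ => RInt (fun z => wt (clamp a b x) z) t s
  end.

Lemma time_extension_interior s x : a < x < b -> time_extension s x = w x s.
Proof. intros Hx. unfold time_extension.
  destruct (Rlt_dec a x) as [Hax|Hax]; [|lra].
  destruct (Rlt_dec x b) as [Hxb|Hxb]; [reflexivity|lra].
Qed.

Lemma is_derive_time_extension x s : 0 < s -> Rbar_lt s T ->
  is_derive (fun r => time_extension r x) s (wt (clamp a b x) s).
Proof.
  intros Hs HsT. unfold time_extension.
  destruct (Rlt_dec a x) as [Hax|Hax]; [destruct (Rlt_dec x b) as [Hxb|Hxb]|].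
  - rewrite clamp_id by lra. now apply Hwt.
  - apply is_derive_time_primitive; auto. apply clamp_in; lra.
  - apply is_derive_time_primitive; auto. apply clamp_in; lra.
Qed.

Lemma is_derive_RInt_time :
  is_derive (fun s => RInt (fun x => w x s) a b) t (RInt (fun x => wt x t) a b).
Proof.
  assert (Hab' : a <= b) by lra.
  assert (Hwin := locally_time_window t Ht HtT).
  apply is_derive_ext with (fun s => RInt (fun x => time_extension s x) a b).
  { intros s. apply RInt_ext. rewrite Rmin_left, Rmax_right by lra.
    intros x Hx. now apply time_extension_interior. }
  replace (RInt (fun x => wt x t) a b)
    with (RInt (fun x => Derive (fun r => time_extension r x) t) a b).
  2:{ apply RInt_ext. rewrite Rmin_left, Rmax_right by lra. intros x Hx.
      transitivity (wt (clamp a b x) t).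
      + apply is_derive_unique. now apply is_derive_time_extension.
      + now rewrite clamp_id by lra. }
  apply is_derive_RInt_param.
  - generalize Hwin. apply filter_imp. intros s [Hs HsT] x _.
    eexists. now apply is_derive_time_extension.
  - intros x _. apply continuity_2d_pt_ext_loc with (fun s y => wt (clamp a b y) s).
    + destruct Hwin as [d Hd]. exists d. intros s y Hs _.
      destruct (Hd s Hs) as [Hs0 HsT].
      symmetry. apply is_derive_unique. now apply is_derive_time_extension.
    + now apply continuity_2d_cyl.
  - generalize Hwin. apply filter_imp. intros s [Hs HsT].
    apply ex_RInt_ext with (fun x => w x s).
    + rewrite Rmin_left, Rmax_right by lra. intros x Hx.
      symmetry. now apply time_extension_interior.
    + apply ex_RInt_clamp; [exact Hab'|]. intros x. now apply continuous_cyl_space.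
Qed.

End TimeDerivative.

End Cylinder.

Lemma is_RInt_derive_interior (F f : R -> R) a b : a < b ->
  (forall x, continuous (fun y => F (clamp a b y)) x) ->
  (forall x, continuous (fun y => f (clamp a b y)) x) ->
  (forall x, a < x < b -> is_derive F x (f x)) ->
  is_RInt f a b (F b - F a).
Proof.
  (* [F] need not be differentiable at [a] and [b]: compare it with a
     primitive of [f] through the mean value theorem on the open interval. *)
  intros Hab HF Hf HdF.
  set (g := fun y => f (clamp a b y)).
  assert (Xg : forall x y, ex_RInt g x y).
  { intros x y. apply (ex_RInt_continuous (V := R_CompleteNormedModule)). intros; apply Hf. }
  set (I := fun x => RInt g a x).
  assert (HI : forall x, is_derive I x (g x)).
  { intros x. apply is_derive_RInt with a; [|apply Hf].
    apply filter_forall. intros y. apply RInt_correct, Xg. }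
  destruct (MVT_gen (fun x => I x - F (clamp a b x)) a b (fun _ => 0)) as [c [_ Hc]].
  - rewrite Rmin_left, Rmax_right by lra. intros x Hx.
    replace 0 with (g x - f x) by (unfold g; rewrite clamp_id by lra; ring).
    apply (is_derive_minus (V := R_NormedModule)); [apply HI|].
    apply is_derive_ext_loc with F; [|now apply HdF].
    apply (locally_interval _ x a b); try easy.
    intros y Hay Hyb. simpl in Hay, Hyb. now rewrite clamp_id by lra.
  - intros x _. apply continuity_pt_filterlim.
    apply (continuous_Rminus I (fun y => F (clamp a b y))); [|apply HF].
    apply (ex_derive_continuous (K := R_AbsRing) (V := R_NormedModule)).
    eexists. apply HI.
  - simpl in Hc. rewrite !clamp_id in Hc by lra.
    unfold I in Hc. rewrite RInt_point in Hc.
    replace (F b - F a) with (RInt g a b) by (unfold zero in Hc; simpl in Hc; lra).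
    apply is_RInt_ext with g.
    + rewrite Rmin_left, Rmax_right by lra. intros x Hx. unfold g. now rewrite clamp_id by lra.
    + apply (RInt_correct (V := R_CompleteNormedModule)), Xg.
Qed.

Definition flux (eps alpha n D chi sgn : R) (w w1 w3 zx : R -> R -> R) (t y : R) : R :=
  - eps * (w y t ^ 4 / (Rpower (w y t) (4 - n) + eps) * w3 y t)
  + Rpower eps (alpha / 2) * (Rpower (w y t) (- alpha) * w1 y t)
  + D * w1 y t
  + sgn * chi * (Rpower (w y t) (5 - n) / (Rpower (w y t) (4 - n) + eps) * zx y t).

Lemma flux_boundary eps alpha n D chi sgn (w w1 w3 zx : R -> R -> R) t y :
  w1 y t = 0 -> w3 y t = 0 -> zx y t = 0 -> flux eps alpha n D chi sgn w w1 w3 zx t y = 0.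
Proof. intros H1 H3 Hz. unfold flux. rewrite H1, H3, Hz. ring. Qed.

Lemma is_derive_flux eps alpha n D chi sgn (w w1 w2 w3 zx : R -> R -> R) kin x t :
  0 < eps -> 0 < w x t ->
  is_derive (fun y => w y t) x (w1 x t) -> is_derive (fun y => w1 y t) x (w2 x t) ->
  ex_derive (fun y => w3 y t) x -> ex_derive (fun y => zx y t) x ->
  is_derive (flux eps alpha n D chi sgn w w1 w3 zx t) x
    (rhs eps alpha n D chi sgn w w1 w2 w3 zx kin x t
     - 3 * w x t ^ 3 / (3 * w x t ^ 2 + eps) * kin x).
Proof.
  intros Heps Hw Dw Dw1 Dw3 Dzx.
  assert (Ew : ex_derive (fun y => w y t) x) by (eexists; exact Dw).
  assert (Eden : ex_derive (fun y => Rpower (w y t) (4 - n) + eps) x).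
  { apply (ex_derive_plus (V := R_NormedModule));
      [now apply ex_derive_Rpower | apply ex_derive_const]. }
  assert (Hden : Rpower (w x t) (4 - n) + eps <> 0)
    by (generalize (Rpower_pos (w x t) (4 - n)); lra).
  assert (E1 : ex_derive (fun y => w y t ^ 4 / (Rpower (w y t) (4 - n) + eps) * w3 y t) x).
  { apply ex_derive_mult; [|exact Dw3].
    apply ex_derive_div; [now apply ex_derive_pow | exact Eden | exact Hden]. }
  assert (E2 : ex_derive (fun y => Rpower (w y t) (- alpha) * w1 y t) x).
  { apply ex_derive_mult; [now apply ex_derive_Rpower | eexists; exact Dw1]. }
  assert (E3 : ex_derive
      (fun y => Rpower (w y t) (5 - n) / (Rpower (w y t) (4 - n) + eps) * zx y t) x).
  { apply ex_derive_mult; [|exact Dzx].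
    apply ex_derive_div; [now apply ex_derive_Rpower | exact Eden | exact Hden]. }
  replace (rhs _ _ _ _ _ _ _ _ _ _ _ _ _ _ - _) with
    (- eps * Derive (fun y => w y t ^ 4 / (Rpower (w y t) (4 - n) + eps) * w3 y t) x
     + Rpower eps (alpha / 2) * Derive (fun y => Rpower (w y t) (- alpha) * w1 y t) x
     + D * w2 x t
     + sgn * chi * Derive
         (fun y => Rpower (w y t) (5 - n) / (Rpower (w y t) (4 - n) + eps) * zx y t) x)
    by (unfold rhs; ring).
  unfold flux.
  repeat apply (is_derive_plus (V := R_NormedModule));
    apply is_derive_scal; try apply Derive_correct; assumption.
Qed.

Lemma is_derive_RInt_reaction a b T eps alpha n D chi sgn
  (w w1 w2 w3 w4 wt z z1 z2 z3 z4 zt : R -> R -> R) (kin : R -> R) t :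
  a < b -> 0 < eps ->
  C41 a b T w w1 w2 w3 w4 wt -> C41 a b T z z1 z2 z3 z4 zt ->
  0 < t -> Rbar_lt t T ->
  (forall x, a <= x <= b -> 0 < w x t) ->
  w1 a t = 0 -> w1 b t = 0 -> w3 a t = 0 -> w3 b t = 0 -> z1 a t = 0 -> z1 b t = 0 ->
  (forall x, a < x < b -> wt x t = rhs eps alpha n D chi sgn w w1 w2 w3 z1 kin x t) ->
  (forall x, continuous (fun y => kin (clamp a b y)) x) ->
  exists I, is_derive (fun s => RInt (fun x => w x s) a b) t I /\
    is_RInt (fun x => 3 * w x t ^ 3 / (3 * w x t ^ 2 + eps) * kin x) a b I.
Proof.
  intros Hab Heps [Dw [Cw [Cw1 [_ [Cw3 [_ Cwt]]]]]] [Dz [_ [Cz1 _]]] Ht HtT Hw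
    Hw1a Hw1b Hw3a Hw3b Hz1a Hz1b Hrhs Hkin.
  assert (Hab' : a <= b) by lra.
  assert (Hwc : forall y, 0 < w (clamp a b y) t) by (intros; apply Hw, clamp_in, Hab').
  assert (Hden : forall y, Rpower (w (clamp a b y) t) (4 - n) + eps <> 0)
    by (intros y; generalize (Rpower_pos (w (clamp a b y) t) (4 - n)); lra).
  set (K := fun x => 3 * w x t ^ 3 / (3 * w x t ^ 2 + eps) * kin x).
  set (F := flux eps alpha n D chi sgn w w1 w3 z1 t).
  exists (RInt (fun x => wt x t) a b). split.
  { apply is_derive_RInt_time with T; try assumption.
    intros x s Hx Hs HsT. apply (Dw x s Hx Hs HsT). }
  assert (Hdiv : is_RInt (fun x => wt x t - K x) a b (F b - F a)).
  { apply is_RInt_derive_interior; [exact Hab | | |].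
    - intros x. unfold F, flux. continuous_R;
        try apply (continuous_cyl_space a b T); auto.
    - intros x. unfold K. continuous_R;
        try apply (continuous_cyl_space a b T); auto.
      generalize (Hwc x). nra.
    - intros x Hx. rewrite Hrhs by exact Hx.
      destruct (Dw x t Hx Ht HtT) as [Dw0 [Dw1 [_ [Dw3 _]]]].
      destruct (Dz x t Hx Ht HtT) as [_ [Dz1 _]].
      apply is_derive_flux; try (eexists; eassumption); auto. apply Hw; lra. }
  unfold F in Hdiv. rewrite !flux_boundary in Hdiv by assumption.
  apply is_RInt_ext with (fun x => wt x t - (wt x t - K x)); [intros x _; simpl; ring|].
  replace (RInt (fun x => wt x t) a b) with (RInt (fun x => wt x t) a b - (0 - 0)) by ring.
  apply (is_RInt_minus (V := R_NormedModule)); [|exact Hdiv].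
  apply is_RInt_continuous_clamp; [exact Hab'|].
  intros x. now apply (continuous_cyl_space a b T).
Qed.

Lemma growth_factor_bounds w eps : 0 < w -> 0 < eps ->
  w - sqrt eps / (2 * sqrt 3) <= 3 * w ^ 3 / (3 * w ^ 2 + eps) <= w.
Proof.
  intros Hw Heps.
  set (s := sqrt eps). set (r := sqrt 3).
  assert (Hs : s * s = eps) by (apply sqrt_sqrt; lra).
  assert (Hr : r * r = 3) by (apply sqrt_sqrt; lra).
  assert (Hs0 : 0 < s) by (apply sqrt_lt_R0; lra).
  assert (Hr0 : 0 < r) by (apply sqrt_lt_R0; lra).
  assert (Hden : 0 < 3 * w ^ 2 + eps) by nra.
  replace (3 * w ^ 3 / (3 * w ^ 2 + eps)) with (w - eps * w / (3 * w ^ 2 + eps))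
    by (field; lra).
  assert (Hdefect : 0 <= eps * w / (3 * w ^ 2 + eps)).
  { apply Rdiv_le_0_compat; nra. }
  (* AM-GM for 3 w^2 + eps >= 2 sqrt 3 sqrt eps w, written as an identity *)
  assert (Hamgm : eps * w / (3 * w ^ 2 + eps)
                  = s / (2 * r) - s * (r * w - s) ^ 2 / (2 * r * (3 * w ^ 2 + eps))).
  { replace (3 * w ^ 2 + eps) with (r * r * w ^ 2 + s * s) by (rewrite Hr, Hs; ring).
    rewrite <- Hs. field. split; nra. }
  assert (Hsq : 0 <= s * (r * w - s) ^ 2 / (2 * r * (3 * w ^ 2 + eps))).
  { apply Rdiv_le_0_compat; [apply Rmult_le_pos; [lra | apply pow2_ge_0] | nra]. }
  split; lra.
Qed.

Lemma reaction_u_le eps u v l a : 0 < eps -> 0 < u -> 0 <= l + a * v ->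
  3 * u ^ 3 / (3 * u ^ 2 + eps) * (l - u + a * v)
  <= (l + sqrt eps / (2 * sqrt 3)) * u - u ^ 2 + a * (u * v).
Proof.
  intros Heps Hu Hl. destruct (growth_factor_bounds u eps Hu Heps) as [Hlo Hhi].
  set (p := 3 * u ^ 3 / (3 * u ^ 2 + eps)) in *.
  set (c := sqrt eps / (2 * sqrt 3)) in *.
  assert (0 <= (u - p) * (l + a * v)) by (apply Rmult_le_pos; lra).
  assert (0 <= (p - (u - c)) * u) by (apply Rmult_le_pos; lra).
  nra.
Qed.

Lemma reaction_v_le eps u v l a : 0 < eps -> 0 < v -> 0 <= l -> 0 <= a * u ->
  3 * v ^ 3 / (3 * v ^ 2 + eps) * (l - v - a * u)
  <= (l + sqrt eps / (2 * sqrt 3)) * v - v ^ 2 - a * (u * v)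
     + a * sqrt eps / (2 * sqrt 3) * u.
Proof.
  intros Heps Hv Hl Hau. destruct (growth_factor_bounds v eps Hv Heps) as [Hlo Hhi].
  set (p := 3 * v ^ 3 / (3 * v ^ 2 + eps)) in *.
  replace (a * sqrt eps / (2 * sqrt 3) * u) with (sqrt eps / (2 * sqrt 3) * (a * u))
    by (field; apply Rgt_not_eq, sqrt_lt_R0; lra).
  set (c := sqrt eps / (2 * sqrt 3)) in *.
  assert (0 <= (v - p) * l) by (apply Rmult_le_pos; lra).
  assert (0 <= (p - (v - c)) * v) by (apply Rmult_le_pos; lra).
  assert (0 <= (p - (v - c)) * (a * u)) by (apply Rmult_le_pos; lra).
  nra.
Qed.

Ltac is_RInt_lincomb :=
  repeat match goal with
  | |- is_RInt _ _ _ (_ + _) => apply (is_RInt_plus (V := R_NormedModule))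
  | |- is_RInt _ _ _ (_ - _) => apply (is_RInt_minus (V := R_NormedModule))
  | |- is_RInt _ _ _ (_ * RInt ?f _ _) => apply (is_RInt_scal (V := R_NormedModule) f)
  end.

Theorem lemma2p2
  (a b : R) (D1 D2 a1 a2 l1 l2 chi1 chi2 alpha n1 n2 eps : R) (T : Rbar)
  (u u1 u2 u3 u4 ut v v1 v2 v3 v4 vt : R -> R -> R) :
  a < b ->
  0 < D1 -> 0 < D2 -> 0 < a1 -> 0 < a2 -> 0 < l1 -> 0 < l2 -> 0 < chi1 -> 0 < chi2 ->
  0 < alpha <= 1 / 2 ->
  0 < n1 < 4 -> 0 < n2 < 4 ->
  0 < eps < 1 ->
  Rbar_lt (Finite 0) T ->
  C41 a b T u u1 u2 u3 u4 ut ->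
  C41 a b T v v1 v2 v3 v4 vt ->
  (forall x t, cyl a b T x t -> 0 < u x t /\ 0 < v x t) ->
  (forall t, 0 < t -> Rbar_lt (Finite t) T ->
     u1 a t = 0 /\ u1 b t = 0 /\ u3 a t = 0 /\ u3 b t = 0 /\
     v1 a t = 0 /\ v1 b t = 0 /\ v3 a t = 0 /\ v3 b t = 0) ->
  (forall x t, a < x < b -> 0 < t -> Rbar_lt (Finite t) T ->
     ut x t = rhs eps alpha n1 D1 chi1 (-1) u u1 u2 u3 v1
                  (fun y => l1 - u y t + a1 * v y t) x t /\
     vt x t = rhs eps alpha n2 D2 chi2 1 v v1 v2 v3 u1
                  (fun y => l2 - v y t - a2 * u y t) x t) ->
  forall t, 0 < t -> Rbar_lt (Finite t) T ->
    (exists dU, is_derive (fun s => RInt (fun x => u x s) a b) t dU /\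
       dU <= (l1 + sqrt eps / (2 * sqrt 3)) * RInt (fun x => u x t) a b
             - RInt (fun x => u x t ^ 2) a b
             + a1 * RInt (fun x => u x t * v x t) a b) /\
    (exists dV, is_derive (fun s => RInt (fun x => v x s) a b) t dV /\
       dV <= (l2 + sqrt eps / (2 * sqrt 3)) * RInt (fun x => v x t) a b
             - RInt (fun x => v x t ^ 2) a b
             - a2 * RInt (fun x => u x t * v x t) a b
             + a2 * sqrt eps / (2 * sqrt 3) * RInt (fun x => u x t) a b).
Proof.
  intros Hab _ _ Ha1 Ha2 Hl1 Hl2 _ _ _ _ _ Heps _ Cu Cv Hpos Hbd Heq t Ht HtT.
  destruct (Hbd t Ht HtT) as [Hu1a [Hu1b [Hu3a [Hu3b [Hv1a [Hv1b [Hv3a Hv3b]]]]]]].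
  assert (Hab' : a <= b) by lra.
  assert (Pu : forall x, a <= x <= b -> 0 < u x t) by (intros x Hx; now apply Hpos).
  assert (Pv : forall x, a <= x <= b -> 0 < v x t) by (intros x Hx; now apply Hpos).
  assert (Ku : forall x, continuous (fun y => u (clamp a b y) t) x)
    by (intros; apply (continuous_cyl_space a b T); try apply Cu; assumption).
  assert (Kv : forall x, continuous (fun y => v (clamp a b y) t) x)
    by (intros; apply (continuous_cyl_space a b T); try apply Cv; assumption).
  split.
  - destruct (is_derive_RInt_reaction a b T eps alpha n1 D1 chi1 (-1) u u1 u2 u3 u4 ut
      v v1 v2 v3 v4 vt (fun y => l1 - u y t + a1 * v y t) t ltac:(lra) ltac:(lra)
      Cu Cv Ht HtT Pu Hu1a Hu1b Hu3a Hu3b Hv1a Hv1b) as [I [HI HK]];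
      [intros x Hx; now apply Heq | intros x; now continuous_R |].
    exists I. split; [exact HI|].
    apply (is_RInt_le _ (fun x => (l1 + sqrt eps / (2 * sqrt 3)) * u x t - u x t ^ 2
                                 + a1 * (u x t * v x t)) a b _ _ Hab' HK).
    + is_RInt_lincomb; apply is_RInt_continuous_clamp; try exact Hab';
        intros; cbv beta; now continuous_R.
    + intros x Hx. apply reaction_u_le; [lra | apply Pu; lra |].
      generalize (Pv x); nra.
  - destruct (is_derive_RInt_reaction a b T eps alpha n2 D2 chi2 1 v v1 v2 v3 v4 vt
      u u1 u2 u3 u4 ut (fun y => l2 - v y t - a2 * u y t) t ltac:(lra) ltac:(lra)
      Cv Cu Ht HtT Pv Hv1a Hv1b Hv3a Hv3b Hu1a Hu1b) as [I [HI HK]];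
      [intros x Hx; now apply Heq | intros x; now continuous_R |].
    exists I. split; [exact HI|].
    apply (is_RInt_le _ (fun x => (l2 + sqrt eps / (2 * sqrt 3)) * v x t - v x t ^ 2
                                 - a2 * (u x t * v x t)
                                 + a2 * sqrt eps / (2 * sqrt 3) * u x t) a b _ _ Hab' HK).
    + is_RInt_lincomb; apply is_RInt_continuous_clamp; try exact Hab';
        intros; cbv beta; now continuous_R.
    + intros x Hx. apply reaction_v_le; [lra | apply Pv; lra | lra |].
      generalize (Pu x); nra.
Qed.
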